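(* Let $\mathcal{G}$ be an infinite prefilter on $\omega$. Then either $\mathcal{G}$ is homeomorphic to the Cantor set $2^\omega$, or $\mathcal{G}$ is homeomorphic to some filter on $\omega$.
   Context: A prefilter on $\omega$ is a collection $\mathcal{G}\subseteq\mathcal{P}(\omega)$ that is upward-closed ($x\in\mathcal{G}$, $x\subseteq y\subseteq\omega$ implies $y\in\mathcal{G}$) and closed under finite intersections. A filter on $\omega$ is a collection $\mathcal{F}\subseteq\mathcal{P}(\omega)$ that is upward-closed, closed under finite intersections, closed under finite modifications (if $x\in\mathcal{F}$ and $y\subseteq\omega$ differs from $x$ by a finite set then $y\in\mathcal{F}$), with $\varnothing\notin\mathcal{F}$ and $\omega\in\mathcal{F}$. Subsets of $\mathcal{P}(\omega)$ are identified via characteristic functions with subspaces of $2^\omega$. *)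

(* Subsets of omega = characteristic functions nat -> bool,
   i.e. points of the Cantor space 2^omega; a family of subsets is a
   predicate on (nat -> bool), i.e. a subspace of 2^omega. *)
From Stdlib Require Import List Arith.

Definition subset_om (x y : nat -> bool) : Prop :=
  forall n, x n = true -> y n = true.

Definition inter_om (x y : nat -> bool) : nat -> bool :=
  fun n => andb (x n) (y n).

Definition fin_mod (x y : nat -> bool) : Prop :=
  exists N, forall n, N <= n -> x n = y n.

Definition empty_om : nat -> bool := fun _ => false.
Definition full_om : nat -> bool := fun _ => true.

Definition is_prefilter (G : (nat -> bool) -> Prop) : Prop :=
  (forall x y, G x -> subset_om x y -> G y) /\
  (forall x y, G x -> G y -> G (inter_om x y)).

Definition is_filter (F : (nat -> bool) -> Prop) : Prop :=
  (forall x y, F x -> subset_om x y -> F y) /\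
  (forall x y, F x -> F y -> F (inter_om x y)) /\
  (forall x y, F x -> fin_mod x y -> F y) /\
  ~ F empty_om /\
  F full_om.

Definition infinite_family (G : (nat -> bool) -> Prop) : Prop :=
  ~ exists l : list (nat -> bool), forall x, G x -> In x l.

(* Continuity of f on the subspace X of 2^omega (product topology,
   via its standard basis of cylinders determined by finite initial segments). *)
Definition agree_upto (m : nat) (x y : nat -> bool) : Prop :=
  forall k, k < m -> x k = y k.

Definition continuous_on (X : (nat -> bool) -> Prop)
  (f : (nat -> bool) -> (nat -> bool)) : Prop :=
  forall x, X x -> forall n, exists m, forall y, X y ->
    agree_upto m x y -> agree_upto n (f x) (f y).

Definition homeomorphic (X Y : (nat -> bool) -> Prop) : Prop :=
  exists (f g : (nat -> bool) -> (nat -> bool)),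
    (forall x, X x -> Y (f x)) /\
    (forall y, Y y -> X (g y)) /\
    (forall x, X x -> forall n, g (f x) n = x n) /\
    (forall y, Y y -> forall n, f (g y) n = y n) /\
    continuous_on X f /\ continuous_on Y g.

Definition cantor_space : (nat -> bool) -> Prop := fun _ => True.

(* Let K be the kernel of G, the set of points lying in every member of G.
   Since G is infinite, the complement D of K is infinite, and a member of G
   is determined by its trace on D; transporting along the increasing
   enumeration of D makes G homeomorphic to the family of all y in 2^omega
   whose lift (K together with y copied onto D) lies in G. If K belongs to G this family is everything,
   i.e. the Cantor set. Otherwise it is a filter: it misses the empty set
   because K is not in G, and it is closed under finite modifications
   because every finite subset of D is disjoint from some member of G. *)
From Stdlib Require Import List Arith.
From Stdlib Require Import Lia Classical ClassicalEpsilon FunctionalExtensionality ConstructiveEpsilon.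

Section Enumeration.

Variable d : nat -> bool.
Hypothesis d_infinite : forall N, exists n, N <= n /\ d n = true.

Fixpoint count_below (n : nat) : nat :=
  match n with
  | 0 => 0
  | S n => count_below n + (if d n then 1 else 0)
  end.

Lemma count_below_le n : count_below n <= n.
Proof. induction n; simpl; [lia|]. destruct (d n); lia. Qed.

Lemma count_below_mono m n : m <= n -> count_below m <= count_below n.
Proof. induction 1; simpl; [lia|]. destruct (d m0); lia. Qed.

Lemma count_below_unbounded N : exists M, N <= count_below M.
Proof.
  induction N as [|N [M HM]]; [exists 0; lia|].
  destruct (d_infinite M) as [n [HMn Hd]].
  exists (S n). simpl. rewrite Hd. pose proof (count_below_mono M n HMn). lia.
Qed.

Lemma count_below_exceeds i : exists n, i < count_below (S n).
Proof.
  destruct (count_below_unbounded (S i)) as [[|n] Hn]; simpl in Hn; [lia|].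
  exists n. simpl. lia.
Qed.

(* [enum i] is the [i]-th point of [d], found as the least [n] with more than
   [i] points of [d] in [0..n]. *)
Definition enum (i : nat) : nat :=
  proj1_sig (epsilon_smallest (fun n => i < count_below (S n))
    (fun n => lt_dec i (count_below (S n))) (count_below_exceeds i)).

Lemma enum_least i :
  i < count_below (S (enum i)) /\ forall m, i < count_below (S m) -> enum i <= m.
Proof. unfold enum. destruct (epsilon_smallest _ _ _) as [n Hn]. exact Hn. Qed.

Lemma enum_spec i : d (enum i) = true /\ count_below (enum i) = i.
Proof.
  destruct (enum_least i) as [Hlt Hmin].
  assert (Hle : count_below (enum i) <= i).
  { destruct (enum i) as [|p] eqn:E; simpl; [lia|].
    destruct (le_lt_dec (count_below (S p)) i) as [h|h]; [exact h|].
    specialize (Hmin p h). lia. }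
  simpl in Hlt. destruct (d (enum i)); [split; [reflexivity|lia]|lia].
Qed.

Lemma enum_count_below n : d n = true -> enum (count_below n) = n.
Proof.
  intro Hd. destruct (enum_least (count_below n)) as [_ Hmin].
  assert (Hle : enum (count_below n) <= n) by (apply Hmin; simpl; rewrite Hd; lia).
  destruct (enum_spec (count_below n)) as [Hde Hc].
  destruct (Nat.eq_dec (enum (count_below n)) n) as [e|ne]; [exact e|].
  assert (Hmono : count_below (S (enum (count_below n))) <= count_below n)
    by (apply count_below_mono; lia).
  simpl in Hmono. rewrite Hde, Hc in Hmono. lia.
Qed.

Lemma enum_lt i M : i < count_below M -> enum i < M.
Proof.
  intro h. destruct M as [|p]; simpl in h; [lia|].
  destruct (enum_least i) as [_ Hmin].
  assert (enum i <= p) by (apply Hmin; exact h). lia.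
Qed.

End Enumeration.

Lemma finite_tail_supersets N : exists l, forall x : nat -> bool,
  (forall n, N <= n -> x n = true) -> In x l.
Proof.
  induction N as [|N [l Hl]].
  - exists (full_om :: nil). intros x Hx. left.
    apply functional_extensionality. intro n. symmetry. apply Hx. lia.
  - pose (set_at b (h : nat -> bool) n := if n =? N then b else h n).
    exists (map (set_at true) l ++ map (set_at false) l).
    intros x Hx.
    assert (Hx' : In (set_at true x) l).
    { apply Hl. intros n Hn. unfold set_at. destruct (n =? N) eqn:E; [reflexivity|].
      apply Nat.eqb_neq in E. apply Hx. lia. }
    assert (Hset : x = set_at (x N) (set_at true x)).
    { apply functional_extensionality. intro n. unfold set_at.
      destruct (n =? N) eqn:E; [apply Nat.eqb_eq in E; subst|]; reflexivity. }
    apply in_or_app. rewrite Hset.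
    destruct (x N); [left|right]; apply in_map; exact Hx'.
Qed.

Lemma homeomorphic_ext_r X Y Y' :
  (forall y, Y y <-> Y' y) -> homeomorphic X Y -> homeomorphic X Y'.
Proof.
  intros HY [f [g [Hf [Hg [Hgf [Hfg [cf cg]]]]]]].
  exists f, g. repeat split.
  - intros x Hx. apply HY, Hf, Hx.
  - intros y Hy. apply Hg, HY, Hy.
  - exact Hgf.
  - intros y Hy. apply Hfg, HY, Hy.
  - exact cf.
  - intros y Hy n. destruct (cg y (proj2 (HY y) Hy) n) as [m Hm].
    exists m. intros z Hz. apply Hm, HY, Hz.
Qed.

Lemma complement_infinite (k : nat -> bool) :
  (forall N, exists n, N <= n /\ k n = false) ->
  forall N, exists n, N <= n /\ negb (k n) = true.
Proof.
  intros Hk N. destruct (Hk N) as [n [HN Hn]].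
  exists n. rewrite Hn. auto.
Qed.

Section Transport.

Variable k : nat -> bool.
Hypothesis k_coinfinite : forall N, exists n, N <= n /\ k n = false.

Let d n := negb (k n).
Let d_infinite := complement_infinite k k_coinfinite.

Definition restrict (x : nat -> bool) (i : nat) : bool := x (enum d d_infinite i).

Definition extend (y : nat -> bool) (n : nat) : bool :=
  if k n then true else y (count_below d n).

Lemma restrict_extend y : restrict (extend y) = y.
Proof.
  apply functional_extensionality. intro i. unfold restrict, extend.
  destruct (enum_spec d d_infinite i) as [Hd Hc].
  apply Bool.negb_true_iff in Hd. rewrite Hd, Hc. reflexivity.
Qed.

Lemma extend_restrict x : subset_om k x -> extend (restrict x) = x.
Proof.
  intro Hkx. apply functional_extensionality. intro n. unfold extend, restrict.
  destruct (k n) eqn:E.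
  - symmetry. apply Hkx, E.
  - rewrite enum_count_below; [reflexivity|]. apply Bool.negb_true_iff, E.
Qed.

Lemma subset_extend y : subset_om k (extend y).
Proof. intros n Hk. unfold extend. rewrite Hk. reflexivity. Qed.

Lemma extend_mono y y' : subset_om y y' -> subset_om (extend y) (extend y').
Proof. intros Hy n. unfold extend. destruct (k n); auto. Qed.

Lemma extend_inter y y' : extend (inter_om y y') = inter_om (extend y) (extend y').
Proof.
  apply functional_extensionality. intro n. unfold extend, inter_om.
  destruct (k n); reflexivity.
Qed.

Lemma continuous_restrict X : continuous_on X restrict.
Proof.
  intros x _ n. destruct (count_below_unbounded d d_infinite n) as [M HM].
  exists M. intros y _ Hxy i Hi. apply Hxy, enum_lt. lia.
Qed.

Lemma continuous_extend X : continuous_on X extend.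
Proof.
  intros y _ n. exists n. intros y' _ Hyy' i Hi. unfold extend.
  destruct (k i); [reflexivity|]. apply Hyy'.
  pose proof (count_below_le d i). lia.
Qed.

Lemma homeomorphic_restrict X :
  (forall x, X x -> subset_om k x) -> homeomorphic X (fun y => X (extend y)).
Proof.
  intro HX. exists restrict, extend. repeat split.
  - intros x Hx. rewrite extend_restrict; auto.
  - auto.
  - intros x Hx n. rewrite extend_restrict; auto.
  - intros y _ n. rewrite restrict_extend. reflexivity.
  - apply continuous_restrict.
  - apply continuous_extend.
Qed.

End Transport.

Section Kernel.

Variable G : (nat -> bool) -> Prop.
Hypothesis G_prefilter : is_prefilter G.

Definition kernel (n : nat) : bool :=
  if excluded_middle_informative (forall x, G x -> x n = true) then true else false.

Lemma subset_kernel x : G x -> subset_om kernel x.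
Proof.
  intros Gx n. unfold kernel. destruct (excluded_middle_informative _); auto.
  discriminate.
Qed.

Lemma kernel_false_witness n : kernel n = false -> exists x, G x /\ x n = false.
Proof.
  unfold kernel. destruct (excluded_middle_informative _) as [_|h]; [discriminate|].
  intros _. apply not_all_ex_not in h. destruct h as [x hx].
  exists x. apply imply_to_and in hx. destruct hx as [Gx hx].
  split; [exact Gx|]. destruct (x n); [contradiction hx|]; reflexivity.
Qed.

Lemma kernel_coinfinite :
  infinite_family G -> forall N, exists n, N <= n /\ kernel n = false.
Proof.
  intros Hinf N. apply NNPP. intro Hcof.
  destruct (finite_tail_supersets N) as [l Hl]. apply Hinf. exists l.
  intros x Gx. apply Hl. intros n Hn. apply (subset_kernel _ Gx).
  destruct (kernel n) eqn:E; [reflexivity|]. exfalso. eauto.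
Qed.

Lemma prefilter_avoids_below x0 M : G x0 ->
  exists z, G z /\ forall n, n < M -> kernel n = false -> z n = false.
Proof.
  intro Gx0. induction M as [|M [z [Gz Hz]]]; [exists x0; split; [exact Gx0|lia]|].
  destruct (kernel M) eqn:E.
  - exists z. split; [exact Gz|]. intros n Hn Hk.
    destruct (Nat.eq_dec n M); [subst; congruence|]. apply Hz; [lia|exact Hk].
  - destruct (kernel_false_witness _ E) as [w [Gw Hw]].
    exists (inter_om z w). split; [apply G_prefilter; assumption|].
    intros n Hn Hk. unfold inter_om.
    destruct (Nat.eq_dec n M); [subst; rewrite Hw; apply Bool.andb_false_r|].
    rewrite Hz; [reflexivity|lia|exact Hk].
Qed.

Hypothesis G_infinite : infinite_family G.

Lemma infinite_family_inhabited : exists x, G x.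
Proof.
  apply NNPP. intro C. apply G_infinite. exists nil. intros x Gx. apply C. eauto.
Qed.

Lemma kernel_image_is_filter :
  ~ G kernel -> is_filter (fun y => G (extend kernel y)).
Proof.
  intro Gk. destruct G_prefilter as [Gup Gint].
  destruct infinite_family_inhabited as [x0 Gx0].
  pose proof (kernel_coinfinite G_infinite) as Hcof.
  repeat split.
  - intros y y' Gy Hyy'. apply (Gup _ _ Gy), extend_mono, Hyy'.
  - intros y y' Gy Gy'. rewrite extend_inter. apply Gint; assumption.
  - intros y y' Gy [N HN].
    set (d n := negb (kernel n)).
    destruct (count_below_unbounded d (complement_infinite _ Hcof) N) as [M HM].
    destruct (prefilter_avoids_below _ M Gx0) as [z [Gz Hz]].
    apply (Gup (inter_om (extend kernel y) z)); [apply Gint; assumption|].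
    intros n. unfold inter_om, extend. destruct (kernel n) eqn:E; [reflexivity|].
    destruct (le_lt_dec N (count_below d n)) as [h|h].
    + rewrite HN by exact h. intro H. apply Bool.andb_true_iff in H. apply H.
    + assert (n < M).
      { destruct (le_lt_dec M n) as [h'|h']; [|exact h'].
        pose proof (count_below_mono d _ _ h'). lia. }
      rewrite (Hz n) by assumption. rewrite Bool.andb_false_r. discriminate.
  - intro Ge. apply Gk. apply (Gup _ _ Ge).
    intros n. unfold extend, empty_om. destruct (kernel n); auto.
  - apply (Gup _ _ Gx0). intros n _. unfold extend, full_om.
    destruct (kernel n); reflexivity.
Qed.

End Kernel.

Theorem mainTheorem2 (G : (nat -> bool) -> Prop) :
  is_prefilter G -> infinite_family G ->
  homeomorphic G cantor_space \/
  exists F : (nat -> bool) -> Prop, is_filter F /\ homeomorphic G F.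
Proof.
  intros HG Hinf.
  pose proof (kernel_coinfinite G Hinf) as Hcof.
  pose proof (homeomorphic_restrict _ Hcof G (subset_kernel G)) as Hhomeo.
  destruct (classic (G (kernel G))) as [Gk|Gk].
  - left. apply (homeomorphic_ext_r G (fun y => G (extend (kernel G) y))); [|exact Hhomeo].
    intro y. split; [intros _; exact I|intros _].
    apply (proj1 HG _ _ Gk), subset_extend.
  - right. exists (fun y => G (extend (kernel G) y)).
    split; [apply kernel_image_is_filter; assumption|exact Hhomeo].
Qed.
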